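(* Let $K\subset\mathbb{R}^n$ be a closed convex set, $y\in\mathbb{R}^n$, $\nu\in K$, and $C\ge 2$ (with $C>2$). For each $m\ge1$ let $\nu_m(y)$ be the output of the Algorithm in the context applied to the bounded convex set $K_m=B(\nu,2^m)\cap K$ with data $y$ (and any starting point in $K_m$). Then all the points $\nu_m(y)$, $m\ge1$, lie in a compact subset of $\mathbb{R}^n$.
   Context: $\|\cdot\|$ is the Euclidean norm, $B(\theta,r)$ the closed Euclidean ball. Algorithm (for a nonempty bounded convex set $L$ with $d=\operatorname{diam}(L)$, constant $C>2$, starting point $\nu_0\in L$): before seeing data, for every $\theta\in L$ and $k\ge1$ fix a maximal (under inclusion) $\frac{d}{2^k(C+1)}$-packing $M_k(\theta)$ of $B(\theta,d/2^{k-1})\cap L$ (distinct points at mutual distance $\ge\frac{d}{2^k(C+1)}$). Given $y$, put $\Upsilon_1=\nu_0$ and $\Upsilon_{k+1}=\arg\min_{\nu\in M_k(\Upsilon_k)}\|y-\nu\|$ (ties: lexicographically least); output $\lim_k\Upsilon_k$ (the sequence is Cauchy). *)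

From HB Require Import structures.
From mathcomp Require Import all_boot all_order all_algebra.
From mathcomp Require Import all_classical all_reals all_analysis.
Set Implicit Arguments. Unset Strict Implicit. Unset Printing Implicit Defensive.
Import Order.TTheory GRing.Theory Num.Theory.
Import numFieldNormedType.Exports.
Local Open Scope classical_set_scope.
Local Open Scope ring_scope.

Section Alg.
Variables (R : realType) (n : nat).
Notation V := 'rV[R]_n.

(* Euclidean norm on R^n (the library norm on matrices is the max norm). *)
Definition enorm (x : V) : R := Num.sqrt (\sum_(i < n) (x ord0 i) ^+ 2).

Definition eball (theta : V) (r : R) : set V := [set x | enorm (x - theta) <= r].

Definition is_convex (L : set V) : Prop :=
  forall x y (t : R), L x -> L y -> 0 <= t -> t <= 1 -> L (t *: x + (1 - t) *: y).

(* diameter (for a nonempty bounded set this is the usual supremum) *)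
Definition ediam (L : set V) : R := sup [set enorm (x - y) | x in L & y in L].

Definition lex_lt (x y : V) : Prop :=
  exists i : 'I_n, (forall j : 'I_n, (j < i)%N -> x ord0 j = y ord0 j) /\ x ord0 i < y ord0 i.
Definition lex_le (x y : V) : Prop := x = y \/ lex_lt x y.

Definition is_packing (eps : R) (A M : set V) : Prop :=
  M `<=` A /\ forall p q, M p -> M q -> p <> q -> eps <= enorm (p - q).

Definition is_maximal_packing (eps : R) (A M : set V) : Prop :=
  is_packing eps A M /\
  forall M', is_packing eps A M' -> M `<=` M' -> M' = M.

Definition packing_family (L : set V) (C : R) (Mk : nat -> V -> set V) : Prop :=
  forall theta k, L theta -> (0 < k)%N ->
    is_maximal_packing (ediam L / (2 ^+ k * (C + 1)))
      (eball theta (ediam L / 2 ^+ k.-1) `&` L) (Mk k theta).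

Definition lex_argmin (y : V) (M : set V) (nu : V) : Prop :=
  M nu /\ forall mu, M mu ->
    enorm (y - nu) < enorm (y - mu) \/
    (enorm (y - nu) = enorm (y - mu) /\ lex_le nu mu).

Definition algorithm_run (Mk : nat -> V -> set V) (nu0 y : V) (Ups : nat -> V) : Prop :=
  Ups 1%N = nu0 /\ forall k, (0 < k)%N -> lex_argmin y (Mk k (Ups k)) (Ups k.+1).

Definition algorithm_output (L : set V) (C : R) (nu0 : V) (Mk : nat -> V -> set V)
    (y x : V) : Prop :=
  L nu0 /\ packing_family L C Mk /\
  exists Ups : nat -> V, algorithm_run Mk nu0 y Ups /\ Ups @ \oo --> x.

End Alg.

(* Runs of the algorithm stay in a neighbourhood of y whose size does not depend on the
   diameter d of the set.  While nu lies in the current search ball B(Ups_k, d/2^(k-1)),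
   the maximal packing has a point within e_k = d/(2^k (C+1)) of nu, so the next iterate
   is within r + e_k of y, where r = |nu - y|.  If e_k >= 2r/C, that iterate is again
   within (C+1) e_k = d/2^k of nu; otherwise all later steps together move by at most
   2(C+1) e_k < (2C+2) 2r/C.  Hence |Ups_(k+1) - y| <= r + (2C+3) 2r/C + d/2^k, and every
   output lies in a fixed box around y, whatever m is. *)
From HB Require Import structures.
From mathcomp Require Import all_boot all_order all_algebra.
From mathcomp Require Import all_classical all_reals all_analysis.
From mathcomp Require Import ring lra.
Set Implicit Arguments. Unset Strict Implicit. Unset Printing Implicit Defensive.
Import Order.TTheory GRing.Theory Num.Theory.
Import numFieldNormedType.Exports.
Local Open Scope classical_set_scope.
Local Open Scope ring_scope.

Section EuclideanNorm.
Variables (R : realType) (n : nat).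
Notation V := 'rV[R]_n.

Lemma enorm_ge0 (a : V) : 0 <= enorm a.
Proof. exact: sqrtr_ge0. Qed.

Lemma enorm_sqr (a : V) : enorm a ^+ 2 = \sum_(i < n) a ord0 i ^+ 2.
Proof. by rewrite sqr_sqrtr // sumr_ge0 // => i _; exact: sqr_ge0. Qed.

Lemma coord_le_enorm (a : V) i : `|a ord0 i| <= enorm a.
Proof.
rewrite -sqrtr_sqr ler_sqrt; last by rewrite sumr_ge0 // => j _; exact: sqr_ge0.
by rewrite (bigD1 i) //= lerDl sumr_ge0 // => j _; exact: sqr_ge0.
Qed.

Lemma enorm0 : enorm (0 : V) = 0.
Proof. by rewrite /enorm big1 ?sqrtr0 // => i _; rewrite mxE expr0n. Qed.

Lemma enormN (a : V) : enorm (- a) = enorm a.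
Proof. by rewrite /enorm; congr Num.sqrt; apply: eq_bigr => i _; rewrite mxE sqrrN. Qed.

Lemma enorm_distC (a b : V) : enorm (a - b) = enorm (b - a).
Proof. by rewrite -enormN opprB. Qed.

Lemma enorm_eq0_coord (a : V) i : enorm a = 0 -> a ord0 i = 0.
Proof. by move=> a0; apply/eqP; rewrite -normr_le0 -a0 coord_le_enorm. Qed.

Lemma cauchy_schwarz_enorm (a b : V) :
  \sum_(i < n) a ord0 i * b ord0 i <= enorm a * enorm b.
Proof.
set A := enorm a; set B := enorm b.
have [AB0|AB_neq0] := eqVneq (A * B) 0.
  move: AB0 (AB0) => /eqP; rewrite mulf_eq0 => /orP[]/eqP ab0 ->.
    by rewrite big1 // => i _; rewrite (enorm_eq0_coord i ab0) mul0r.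
  by rewrite big1 // => i _; rewrite (enorm_eq0_coord i ab0) mulr0.
have AB_gt0 : 0 < 2 * (A * B) by rewrite mulr_gt0 // lt0r AB_neq0 mulr_ge0 ?enorm_ge0.
rewrite -(ler_pM2l AB_gt0) mulr_sumr.
(* termwise AM-GM: 2 (A B) a_i b_i <= B^2 a_i^2 + A^2 b_i^2 *)
have -> : 2 * (A * B) * (A * B) = \sum_(i < n) (a ord0 i ^+ 2 * B ^+ 2 + b ord0 i ^+ 2 * A ^+ 2).
  by rewrite big_split /= -!mulr_suml -!enorm_sqr -/A -/B; ring.
apply: ler_sum => i _.
have := sqr_ge0 (a ord0 i * B - b ord0 i * A); nra.
Qed.

Lemma ler_enormD (a b : V) : enorm (a + b) <= enorm a + enorm b.
Proof.
have ab_ge0 : 0 <= enorm a + enorm b by rewrite addr_ge0 ?enorm_ge0.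
rewrite -(ger0_norm ab_ge0) -sqrtr_sqr ler_sqrt ?sqr_ge0 // sqrrD !enorm_sqr.
have -> : \sum_(i < n) (a + b) ord0 i ^+ 2 = \sum_(i < n) a ord0 i ^+ 2
    + \sum_(i < n) b ord0 i ^+ 2 + 2 * \sum_(i < n) a ord0 i * b ord0 i.
  by rewrite mulr_sumr -!big_split /=; apply: eq_bigr => i _; rewrite mxE; ring.
have := cauchy_schwarz_enorm a b; rewrite mulr2n; lra.
Qed.

Lemma ler_enorm_distD (a b c : V) : enorm (a - c) <= enorm (a - b) + enorm (b - c).
Proof. by have := ler_enormD (a - b) (b - c); rewrite addrA subrK. Qed.

Lemma eball_center (c : V) (rho : R) : 0 <= rho -> eball c rho c.
Proof. by rewrite /eball /= subrr enorm0. Qed.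

Definition box (c : V) (rho : R) : set V :=
  [set v | forall i, `[c ord0 i - rho, c ord0 i + rho]%classic (v ord0 i)].

Lemma box_compact (c : V) (rho : R) : compact (box c rho).
Proof. exact: rV_compact (fun i => @segment_compact R _ _). Qed.

Lemma box_closed (c : V) (rho : R) : closed (box c rho).
Proof. by apply: compact_closed; [exact: norm_hausdorff|exact: box_compact]. Qed.

Lemma eball_sub_box (c : V) (rho : R) : eball c rho `<=` box c rho.
Proof.
move=> v cv i; have := le_trans (coord_le_enorm (v - c) i) cv.
rewrite !mxE ler_distlC => /andP[lo hi]; rewrite /= in_itv /=; apply/andP; split; lra.
Qed.

End EuclideanNorm.

Section PackingsAndDiameter.
Variables (R : realType) (n : nat).
Notation V := 'rV[R]_n.

Lemma maximal_packing_cover (eps : R) (A M : set V) x :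
  0 <= eps -> is_maximal_packing eps A M -> A x -> exists2 q, M q & enorm (q - x) <= eps.
Proof.
move=> eps_ge0 [[MA M_sep] M_max] Ax; apply: contrapT => no_q.
have far q : M q -> eps < enorm (q - x).
  by move=> Mq; rewrite ltNge; apply/negP => qx; apply: no_q; exists q.
suff Mx : M x by have := far _ Mx; rewrite subrr enorm0 ltNge eps_ge0.
suff <- : M `|` [set x] = M by right.
apply: M_max; last by move=> z Mz; left.
split; first by move=> z [/MA //|->].
move=> p q [Mp|->] [Mq|->] pq //.
- exact: M_sep.
- exact/ltW/far.
- by rewrite enorm_distC; exact/ltW/far.
Qed.

Variables (L : set V) (c : V) (rho : R).
Hypothesis L_bounded : L `<=` eball c rho.

Lemma enorm_le_ediam x z : L x -> L z -> enorm (x - z) <= ediam L.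
Proof.
move=> Lx Lz; apply: ub_le_sup; last by exists x => //; exists z.
exists (rho + rho) => _ [u Lu [v Lv <-]].
apply: le_trans (ler_enorm_distD u c v) _.
by apply: lerD; [exact: L_bounded|rewrite enorm_distC; exact: L_bounded].
Qed.

Lemma ediam_ge0 : L c -> 0 <= ediam L.
Proof. by move=> Lc; rewrite -(enorm0 R n) -(subrr c) enorm_le_ediam. Qed.

End PackingsAndDiameter.

Definition run_radius (R : numFieldType) (C r : R) : R := r + (2 * C + 3) * (2 * r / C).

Section AlgorithmRun.
Variables (R : realType) (n : nat).
Notation V := 'rV[R]_n.
Variables (L : set V) (C rho : R) (Mk : nat -> V -> set V) (nu0 y nu : V) (Ups : nat -> V).
Hypotheses (L_nu : L nu) (L_bounded : L `<=` eball nu rho) (C_gt0 : 0 < C).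
Hypotheses (L_nu0 : L nu0) (PF : packing_family L C Mk) (run : algorithm_run Mk nu0 y Ups).

Let d := ediam L.
Let r := enorm (nu - y).
Let T := run_radius C r.

Let d_ge0 : 0 <= d. Proof. exact: ediam_ge0 L_bounded L_nu. Qed.

Lemma run_step j : L (Ups j.+1) ->
  [/\ L (Ups j.+2), enorm (Ups j.+2 - Ups j.+1) <= d / 2 ^+ j
    & enorm (Ups j.+1 - nu) <= d / 2 ^+ j ->
      enorm (Ups j.+2 - y) <= r + d / (2 ^+ j.+1 * (C + 1))].
Proof.
move=> L_Uj; have M_max := @PF _ j.+1 L_Uj isT.
have [[M_sub _] _] := M_max; have [M_U M_argmin] := run.2 j.+1 isT.
have [U_ball L_U] := M_sub _ M_U; split => // nu_near.
have e_ge0 : 0 <= d / (2 ^+ j.+1 * (C + 1)).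
  by rewrite divr_ge0 // mulr_ge0 ?exprn_ge0 ?addr_ge0 ?(ltW C_gt0).
have [|q M_q qnu] := maximal_packing_cover e_ge0 M_max (x := nu).
  by split => //; rewrite /eball /= enorm_distC.
have yU : enorm (y - Ups j.+2) <= enorm (y - q).
  by case: (M_argmin q M_q) => [/ltW //|[-> _]].
rewrite enorm_distC; apply: le_trans yU _; rewrite enorm_distC.
by apply: le_trans (ler_enorm_distD q nu y) _; rewrite -/r addrC lerD2l.
Qed.

Lemma run_in_set j : L (Ups j.+1).
Proof. by elim: j => [|j /run_step[]]; first by rewrite run.1. Qed.

Let tracks_nu_or_settled j :=
  enorm (Ups j.+1 - nu) <= d / 2 ^+ j \/ enorm (Ups j.+1 - y) + 2 * (d / 2 ^+ j) <= T.

Lemma run_tracks_nu_or_settled j : tracks_nu_or_settled j.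
Proof.
elim: j => [|j IH].
  by left; rewrite expr0 divr1; exact: (enorm_le_ediam L_bounded (run_in_set 0)).
have [_ U_step U_near] := run_step (run_in_set j).
set e := d / (2 ^+ j.+1 * (C + 1)) in U_near.
have C1_neq0 : C + 1 != 0 by apply: lt0r_neq0; rewrite addr_gt0.
have dj : d / 2 ^+ j = 2 * (C + 1) * e by rewrite /e exprS; field; rewrite C1_neq0 expf_neq0.
have dj1 : d / 2 ^+ j.+1 = (C + 1) * e by rewrite /e; field; rewrite C1_neq0 expf_neq0.
rewrite dj in U_step U_near; move: IH; rewrite /tracks_nu_or_settled dj dj1.
have U_y_step := ler_enorm_distD (Ups j.+2) (Ups j.+1) y.
case=> [nu_close|settled]; last by right; lra.
have U_y := U_near nu_close.
have [e_large|e_small] := lerP (2 * r) (C * e).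
  by left; have := ler_enorm_distD (Ups j.+2) y nu; rewrite (enorm_distC y) -/r; lra.
right; have e_lt : e < 2 * r / C by rewrite ltr_pdivlMr // mulrC.
have : (2 * C + 3) * e <= (2 * C + 3) * (2 * r / C).
  by rewrite ler_pM2l ?(ltW e_lt) // addr_gt0 ?mulr_gt0.
rewrite /T /run_radius; lra.
Qed.

Lemma run_dist_le j : enorm (Ups j.+1 - y) <= T + d / 2 ^+ j.
Proof.
have r_ge0 : 0 <= r by exact: enorm_ge0.
have rT : r <= T.
  by rewrite /T /run_radius lerDl mulr_ge0 ?divr_ge0 ?addr_ge0 ?mulr_ge0 ?(ltW C_gt0).
have dj_ge0 : 0 <= d / 2 ^+ j by rewrite divr_ge0 ?exprn_ge0.
case: (run_tracks_nu_or_settled j) => [U_nu|]; last lra.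
by have := ler_enorm_distD (Ups j.+1) nu y; rewrite -/r; lra.
Qed.

End AlgorithmRun.

Lemma div_exp2_le1_near (R : realType) (d : R) : \forall j \near \oo, d / 2 ^+ j <= 1.
Proof.
exists (Num.truncn d).+1 => // j /= dj.
rewrite ler_pdivrMr ?exprn_gt0 // mul1r; apply/ltW/(lt_le_trans (truncnS_gt d)).
by rewrite -natrX ler_nat; apply: leq_trans dj _; exact/ltnW/ltn_expl.
Qed.

Lemma algorithm_output_in_box (R : realType) (n : nat) (L : set 'rV[R]_n) (C rho : R)
    nu0 Mk (y nu x : 'rV[R]_n) :
  L nu -> L `<=` eball nu rho -> 0 < C -> algorithm_output L C nu0 Mk y x ->
  box y (run_radius C (enorm (nu - y)) + 1) x.
Proof.
move=> L_nu L_bounded C_gt0 [L_nu0 [PF [Ups [run Ups_cvg]]]].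
have UpsS_cvg : [sequence Ups j.+1]_j @ \oo --> x by rewrite cvg_shiftS.
apply: (closed_cvg _ (@box_closed _ _ _ _) _ _ UpsS_cvg).
near=> j; apply: eball_sub_box.
apply: le_trans (run_dist_le L_nu L_bounded C_gt0 L_nu0 PF run j) _.
by rewrite lerD2l; near: j; exact: div_exp2_le1_near.
Unshelve. all: by end_near.
Qed.

Theorem mainTheorem16 (R : realType) (n : nat) (K : set 'rV[R]_n)
  (y nu : 'rV[R]_n) (C : R)
  (nu0 : nat -> 'rV[R]_n) (Mk : nat -> nat -> 'rV[R]_n -> set 'rV[R]_n)
  (num : nat -> 'rV[R]_n) :
  closed K -> is_convex K -> K nu -> 2 < C ->
  (forall m : nat, (0 < m)%N ->
     algorithm_output (eball nu (2 ^+ m) `&` K) C (nu0 m) (Mk m) y (num m)) ->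
  exists S : set 'rV[R]_n, compact S /\ forall m : nat, (0 < m)%N -> S (num m).
Proof.
move=> _ _ K_nu C_gt2 out.
exists (box y (run_radius C (enorm (nu - y)) + 1)); split; first exact: box_compact.
move=> m m_gt0; apply: algorithm_output_in_box (out m m_gt0).
- by split => //; apply: eball_center; rewrite exprn_ge0 ?ler0n.
- exact: subIsetl.
- exact: lt_trans C_gt2.
Qed.
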